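(* Consider the APT–DIFT game described in the context and the value-iteration sequence $V^{(0)},V^{(1)},V^{(2)},\dots$ of functions $\mathbf S\to\mathbb R$ defined there. Then for every $k\ge0$ and every $s\in\mathbf S$, $V^{(k+1)}(s)\ge V^{(k)}(s)$.
   Context: Let $\mathcal G=(V_{\mathcal G},E_{\mathcal G})$ be a finite directed graph with $V_{\mathcal G}=\{v_1,\dots,v_N\}$, let $\lambda\subset V_{\mathcal G}$ be a set of entry points and $\mathcal D=\{v_1,\dots,v_q\}\subset V_{\mathcal G}$ a destination set. Let $FN,FP:V_{\mathcal G}\to(0,1)$ and $\beta>0$. The APT–DIFT game has state space $\mathbf S=\{v_0,v_1,\dots,v_N,\phi,\tau_A,\tau_B\}$; the states in $\{\phi,\tau_A,\tau_B\}\cup\mathcal D$ are absorbing with empty action sets. At $v_0$: $\mathcal A_A(v_0)=\lambda$, $\mathcal A_D(v_0)=\{0\}$. At a non-absorbing $s=v_i\in V_{\mathcal G}$: $\mathcal A_A(s)=\{\phi\}\cup\{v_j:(v_i,v_j)\in E_{\mathcal G}\}$, $\mathcal A_D(s)=\{0\}\cup\{v_j:(v_i,v_j)\in E_{\mathcal G}\}$. Transition probabilities $P(s,a,d,s')$ for $a\in\mathcal A_A(s)$, $d\in\mathcal A_D(s)$: if $d=0$, $s'=a$ with probability $1$; if $d=a$, $s'=a$ with probability $FN(d)$ and $s'=\tau_A$ with probability $1-FN(d)$; if $d\ne0$ and $d\neq a$, $s'=\tau_B$ with probability $FP(d)$ and $s'=a$ with probability $1-FP(d)$. Value iteration (Algorithm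 1): $V^{(0)}(s)=0$ for all $s\in\mathbf S$; $V^{(1)}(s)=\beta$ for $s\in\{\tau_A,\phi\}$ and $V^{(1)}(s)=0$ for all other $s$; and for $k\ge1$, $V^{(k+1)}(s)=\beta$ if $s\in\{\phi,\tau_A\}$, $V^{(k+1)}(s)=0$ if $s\in\{\tau_B\}\cup\mathcal D$, and otherwise $$V^{(k+1)}(s)=\max_{p\in\Delta(\mathcal A_D(s))}\ \min_{a\in\mathcal A_A(s)}\ \sum_{s'\in\mathbf S}\sum_{d\in\mathcal A_D(s)}p(d)\,P(s,a,d,s')\,V^{(k)}(s'),$$ where $\Delta(\mathcal A_D(s))$ is the set of probability distributions on $\mathcal A_D(s)$. *)

From HB Require Import structures.
From mathcomp Require Import all_boot all_order all_algebra.
From mathcomp Require Import boolp classical_sets reals.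
Set Implicit Arguments. Unset Strict Implicit. Unset Printing Implicit Defensive.
Import Order.TTheory GRing.Theory Num.Theory.
Local Open Scope ring_scope.

(* States: v_0, the graph vertices v_1..v_N (encoded by i : 'I_N, v_{i+1}),
   phi, tau_A, tau_B. *)
Inductive state (N : nat) := Sv0 | Sv of 'I_N | Sphi | StauA | StauB.
Arguments Sv0 {N}. Arguments Sphi {N}. Arguments StauA {N}. Arguments StauB {N}.

Section StateFin.
Variable N : nat.
Definition state_enc (s : state N) : 'I_N + 'I_4 :=
  match s with
  | Sv0 => inr (@Ordinal 4 0 isT)
  | Sv i => inl i
  | Sphi => inr (@Ordinal 4 1 isT)
  | StauA => inr (@Ordinal 4 2 isT)
  | StauB => inr (@Ordinal 4 3 isT)
  end.
Definition state_dec (x : 'I_N + 'I_4) : state N :=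
  match x with
  | inl i => Sv i
  | inr k => match val k with 0 => Sv0 | 1 => Sphi | 2 => StauA | _ => StauB end
  end.
Lemma state_encK : cancel state_enc state_dec. Proof. by case. Qed.
HB.instance Definition _ := Finite.copy (state N) (can_type state_encK).
End StateFin.

Section Game.
Variables (R : realType) (N : nat) (E : rel 'I_N) (lam : {set 'I_N}) (q : nat)
          (FN FP : 'I_N -> R) (beta : R).

Definition dest : {set 'I_N} := [set i : 'I_N | (i < q)%N].

(* attacker action sets (actions are target states) *)
Definition AA (s : state N) : {set state N} :=
  match s with
  | Sv0 => [set Sv i | i in lam]
  | Sv i => if i \in dest then finset.set0
            else Sphi |: [set Sv j | j in [set j | E i j]]
  | _ => finset.set0
  end.

(* defender action sets: None encodes the action 0, Some j the vertex j *)
Definition AD (s : state N) : {set option 'I_N} :=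
  match s with
  | Sv0 => [set None]
  | Sv i => if i \in dest then finset.set0
            else None |: [set Some j | j in [set j | E i j]]
  | _ => finset.set0
  end.

Definition trans (s : state N) (a : state N) (d : option 'I_N) (s' : state N) : R :=
  match d with
  | None => (s' == a)%:R
  | Some j => if a == Sv j
              then FN j * (s' == a)%:R + (1 - FN j) * (s' == StauA)%:R
              else FP j * (s' == StauB)%:R + (1 - FP j) * (s' == a)%:R
  end.

Definition distr_on (A : {set option 'I_N}) (p : option 'I_N -> R) : Prop :=
  (forall d, 0 <= p d) /\ (forall d, d \notin A -> p d = 0) /\
  \sum_(d in A) p d = 1.

Definition payoff (V : state N -> R) (s : state N) (p : option 'I_N -> R)
    (a : state N) : R :=
  \sum_(s' : state N) \sum_(d in AD s) p d * trans s a d s' * V s'.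

(* one Bellman step for k >= 1: max over p in Delta(AD s) of min over a in AA s
   (the max is the supremum, which is attained) *)
Definition vstep (V : state N -> R) (s : state N) : R :=
  match s with
  | Sphi | StauA => beta
  | StauB => 0
  | Sv i => if i \in dest then 0 else
      sup [set x | exists2 p, distr_on (AD s) p &
             x = inf [set y | exists2 a, a \in AA s & y = payoff V s p a]%classic]%classic
  | Sv0 =>
      sup [set x | exists2 p, distr_on (AD s) p &
             x = inf [set y | exists2 a, a \in AA s & y = payoff V s p a]%classic]%classic
  end.

Definition V1 (s : state N) : R :=
  match s with Sphi | StauA => beta | _ => 0 end.

Fixpoint VI (k : nat) : state N -> R :=
  match k with
  | 0 => fun _ => 0
  | k'.+1 => match k' with
             | 0 => V1
             | _ => vstep (VI k')
             end
  end.
End Game.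

(* Write T for the Bellman operator vstep.  The expected payoff of the zero
   value function is zero, so V^(1) = T(V^(0)) and hence V^(k+1) = T(V^(k))
   for every k.  Since V^(0) = 0 <= V^(1) (as beta > 0), the claim follows by
   induction once T is monotone: the expected payoff is monotone in the value
   function because all weights p(d) P(s,a,d,s') are nonnegative, and a
   sup-inf preserves pointwise inequalities between bounded families. *)
From HB Require Import structures.
From mathcomp Require Import all_boot all_order all_algebra.
From mathcomp Require Import boolp classical_sets reals.
From mathcomp Require Import lra.
Set Implicit Arguments. Unset Strict Implicit. Unset Printing Implicit Defensive.
Import Order.TTheory GRing.Theory Num.Theory.
Local Open Scope ring_scope.

Section MaxMin.
Variables (R : realType) (P : Type) (A : finType) (D : set P) (As : {set A}).
Variables (p0 : P) (a0 : A).
Hypotheses (Dp0 : D p0) (As_a0 : a0 \in As).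

Definition maxmin (f : P -> A -> R) : R :=
  sup [set x | exists2 p, D p &
         x = inf [set y | exists2 a, a \in As & y = f p a]%classic]%classic.

Lemma maxmin_ge (c M : R) (f : P -> A -> R) :
  (forall p a, D p -> a \in As -> c <= f p a <= M) -> c <= maxmin f.
Proof.
move=> hf; set If := fun p => [set y | exists2 a, a \in As & y = f p a]%classic.
have If_lb p : D p -> has_lbound (If p).
  by move=> Dp; exists c => _ [a Aa ->]; case/andP: (hf p a Dp Aa).
have c_le_inf : c <= inf (If p0).
  apply: lb_le_inf => [|_ [a Aa ->]]; first by exists (f p0 a0), a0.
  by case/andP: (hf p0 a Dp0 Aa).
apply: (le_trans c_le_inf); apply: ub_le_sup; last by exists p0.
exists M => _ [p Dp ->]; apply: le_trans (_ : f p a0 <= M).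
  by apply: ge_inf; [exact: If_lb | exists a0].
by case/andP: (hf p a0 Dp As_a0).
Qed.

Lemma maxmin_le (m c : R) (f : P -> A -> R) :
  (forall p a, D p -> a \in As -> m <= f p a <= c) -> maxmin f <= c.
Proof.
move=> hf; apply: ge_sup => [|_ [p Dp ->]].
  by exists (inf [set y | exists2 a, a \in As & y = f p0 a]%classic), p0.
apply: le_trans (_ : f p a0 <= c); last by case/andP: (hf p a0 Dp As_a0).
apply: ge_inf; last by exists a0.
by exists m => _ [a Aa ->]; case/andP: (hf p a Dp Aa).
Qed.

Lemma maxmin_const (c : R) (f : P -> A -> R) :
  (forall p a, D p -> a \in As -> f p a = c) -> maxmin f = c.
Proof.
move=> hf; apply/le_anti/andP; split.
  by apply: (maxmin_le (m := c)) => p a Dp Aa; rewrite hf ?lexx.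
by apply: (maxmin_ge (M := c)) => p a Dp Aa; rewrite hf ?lexx.
Qed.

Lemma le_maxmin (M : R) (f g : P -> A -> R) :
  (forall p a, D p -> a \in As -> - M <= f p a) ->
  (forall p a, D p -> a \in As -> f p a <= g p a) ->
  (forall p a, D p -> a \in As -> g p a <= M) ->
  maxmin f <= maxmin g.
Proof.
move=> f_lb le_fg g_ub.
set I := fun (h : P -> A -> R) p => [set y | exists2 a, a \in As & y = h p a]%classic.
have If_lb p : D p -> has_lbound (I f p).
  by move=> Dp; exists (- M) => _ [a Aa ->]; exact: f_lb.
have Ig_lb p : D p -> has_lbound (I g p).
  move=> Dp; exists (- M) => _ [a Aa ->].
  exact: le_trans (f_lb _ _ Dp Aa) (le_fg _ _ Dp Aa).
have inf_le p : D p -> inf (I f p) <= inf (I g p).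
  move=> Dp; apply: lb_le_inf => [|_ [a Aa ->]]; first by exists (g p a0), a0.
  by apply: le_trans (le_fg _ _ Dp Aa); apply: ge_inf; [exact: If_lb | exists a].
have Sg_ub : has_ubound [set x | exists2 p, D p & x = inf (I g p)]%classic.
  exists M => _ [p Dp ->]; apply: le_trans (g_ub _ _ Dp As_a0).
  by apply: ge_inf; [exact: Ig_lb | exists a0].
apply: ge_sup => [|_ [p Dp ->]]; first by exists (inf (I f p0)), p0.
by apply: le_trans (inf_le p Dp) _; apply: ub_le_sup => //; exists p.
Qed.

End MaxMin.

Lemma distr_on_le1 (R : realType) (N : nat) (A : {set option 'I_N})
    (p : option 'I_N -> R) d :
  distr_on A p -> 0 <= p d <= 1.
Proof.
move=> [p_ge0 [p_out p_sum]]; rewrite p_ge0 /=.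
have [Ad|Ad] := boolP (d \in A); last by rewrite p_out.
by rewrite -p_sum (bigD1 d) //= lerDl sumr_ge0.
Qed.

Lemma distr_on_None {R : realType} (N : nat) (A : {set option 'I_N}) :
  None \in A -> distr_on A (fun d => (d == None)%:R : R).
Proof.
move=> A_None; split=> [d|]; first exact: ler0n.
split=> [d Ad|]; first by case: eqP Ad => // ->; rewrite A_None.
rewrite (bigD1 None) //= big1 ?addr0 ?eqxx // => d /andP[_].
by move/negbTE=> ->.
Qed.

Section Game.
Variables (R : realType) (N : nat) (E : rel 'I_N) (lam : {set 'I_N}) (q : nat)
          (FN FP : 'I_N -> R) (beta : R).
Hypotheses (FN01 : forall v, 0 <= FN v <= 1) (FP01 : forall v, 0 <= FP v <= 1).

Lemma trans_bounds s a d s' : 0 <= trans FN FP s a d s' <= 1.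
Proof.
have mix01 (c : R) (x y : bool) :
    0 <= c <= 1 -> 0 <= c * x%:R + (1 - c) * y%:R <= 1.
  by case/andP=> c0 c1; case: x; case: y; rewrite /= ?mulr1 ?mulr0 ?addr0 ?add0r;
    apply/andP; split; lra.
case: d => [j|] /=; last by case: (s' == a); rewrite /= ler01 lexx.
by case: (a == Sv j); apply: mix01.
Qed.

Lemma weight_bounds s p a d s' :
  distr_on (AD E q s) p -> 0 <= p d * trans FN FP s a d s' <= 1.
Proof.
move=> hp; have /andP[p_ge0 p_le1] := distr_on_le1 d hp.
have /andP[t_ge0 t_le1] := trans_bounds s a d s'.
by rewrite mulr_ge0 //= -[1]mul1r ler_pM.
Qed.

Lemma le_payoff V W s p a :
  distr_on (AD E q s) p -> (forall s, V s <= W s) ->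
  payoff E q FN FP V s p a <= payoff E q FN FP W s p a.
Proof.
move=> hp le_VW; apply: ler_sum => s' _; apply: ler_sum => d _.
by case/andP: (weight_bounds a d s' hp) => w0 _; rewrite ler_wpM2l.
Qed.

Definition payoff_bound (V : state N -> R) s :=
  \sum_(s' : state N) \sum_(d in AD E q s) `|V s'|.

Lemma payoff_norm_le V s p a :
  distr_on (AD E q s) p -> `|payoff E q FN FP V s p a| <= payoff_bound V s.
Proof.
move=> hp; apply: le_trans (ler_norm_sum _ _ _) _; apply: ler_sum => s' _.
apply: le_trans (ler_norm_sum _ _ _) _; apply: ler_sum => d _.
have /andP[w0 w1] := weight_bounds a d s' hp.
by rewrite normrM (ger0_norm w0) ler_piMl.
Qed.

Definition nonabsorbing (s : state N) : bool :=
  match s with Sv0 => true | Sv i => i \notin dest N q | _ => false end.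

Lemma None_in_AD s : nonabsorbing s -> None \in AD E q s.
Proof. by case: s => //= [|i /negbTE ->]; rewrite ?set11 ?setU11. Qed.

Lemma AA_witness s :
  lam != finset.set0 -> nonabsorbing s -> exists a, a \in AA E lam q s.
Proof.
move=> lam_neq0; case: s => //= [_|i /negbTE ->]; last by exists Sphi; rewrite setU11.
by case/set0Pn: lam_neq0 => i lam_i; exists (Sv i); apply: imset_f.
Qed.

Lemma vstep_nonabsorbing V s : nonabsorbing s ->
  vstep E lam q FN FP beta V s =
  maxmin (distr_on (AD E q s)) (AA E lam q s) (payoff E q FN FP V s).
Proof. by case: s => //= i /negbTE ->. Qed.

Lemma vstep_absorbing V W s : ~~ nonabsorbing s ->
  vstep E lam q FN FP beta V s = vstep E lam q FN FP beta W s.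
Proof. by case: s => //= i /negbNE ->. Qed.

Hypothesis lam_neq0 : lam != finset.set0.

Lemma vstep0 : vstep E lam q FN FP beta (fun _ => 0) =1 V1 beta.
Proof.
move=> s; have [ns|abs] := boolP (nonabsorbing s); last first.
  by case: s abs => //= i; rewrite negbK => ->.
have -> : V1 beta s = 0 by case: s ns.
have [a0 AA_a0] := AA_witness lam_neq0 ns.
rewrite vstep_nonabsorbing //.
apply: (maxmin_const (distr_on_None (None_in_AD ns)) AA_a0).
by move=> p a _ _; apply: big1 => s' _; apply: big1 => d _; rewrite mulr0.
Qed.

Lemma VI_succ k :
  VI E lam q FN FP beta k.+1 =1 vstep E lam q FN FP beta (VI E lam q FN FP beta k).
Proof. by case: k => [s|k s] //=; rewrite vstep0. Qed.

Lemma vstep_mono V W : (forall s, V s <= W s) ->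
  forall s, vstep E lam q FN FP beta V s <= vstep E lam q FN FP beta W s.
Proof.
move=> le_VW s; have [ns|abs] := boolP (nonabsorbing s); last first.
  by rewrite (vstep_absorbing V W abs).
have [a0 AA_a0] := AA_witness lam_neq0 ns.
rewrite !vstep_nonabsorbing //.
have bound_ge0 U : 0 <= payoff_bound U s.
  by apply: sumr_ge0 => s' _; apply: sumr_ge0.
apply: (le_maxmin (distr_on_None (None_in_AD ns)) AA_a0
  (M := payoff_bound V s + payoff_bound W s)) => p a hp _.
- case/ler_normlP: (payoff_norm_le V a hp) => lb _.
  by rewrite lerNl (le_trans lb) ?lerDl.
- exact: le_payoff.
- apply: le_trans (ler_norm _) _.
  by apply: le_trans (payoff_norm_le W a hp) _; rewrite lerDr.
Qed.

End Game.

Theorem lemma1 (R : realType) (N : nat) (E : rel 'I_N) (lam : {set 'I_N})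
  (q : nat) (FN FP : 'I_N -> R) (beta : R)
  (hq : (q <= N)%N) (hlam : lam != finset.set0)
  (hFN : forall v, 0 < FN v < 1) (hFP : forall v, 0 < FP v < 1)
  (hbeta : 0 < beta) :
  forall (k : nat) (s : state N),
    VI E lam q FN FP beta k s <= VI E lam q FN FP beta k.+1 s.
Proof.
have in01 (c : R) : 0 < c < 1 -> 0 <= c <= 1 by case/andP=> c0 c1; rewrite !ltW.
have FN01 v := in01 _ (hFN v); have FP01 v := in01 _ (hFP v).
elim=> [|k IH] s; first by case: s; rewrite //= ltW.
by rewrite !(VI_succ E q FN FP beta hlam); apply: vstep_mono.
Qed.
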